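(* Let $\mathcal X$ be a subset of the nonzero elements of a field and let $f:\mathcal X\to\mathcal X$ be such that the map $$S:\mathcal X\times\mathcal X\to\mathcal X\times\mathcal X,\qquad S(x,y)=(u,v)=\Big(x\,\frac{f(y)}{f(xy)},\;xy\Big)$$ is well defined, and suppose $f(u)f(v)=f(x)$ for all $x,y\in\mathcal X$, where $(u,v)=S(x,y)$. Then $S$ is a pentagon map.
   Context: For a set $Y$ and $S:Y\times Y\to Y\times Y$, define on $Y^3$: $S_{12}=S\times\mathrm{id}_Y$, $S_{23}=\mathrm{id}_Y\times S$, $S_{13}(y_1,y_2,y_3)=(p,y_2,q)$ with $(p,q)=S(y_1,y_3)$. $S$ is a pentagon map if $S_{12}\circ S_{13}\circ S_{23}=S_{23}\circ S_{12}$ (rightmost applied first). *)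

From HB Require Import structures.
From mathcomp Require Import all_boot all_order all_algebra.
Set Implicit Arguments. Unset Strict Implicit. Unset Printing Implicit Defensive.
Import GRing.Theory.
Local Open Scope ring_scope.

Definition S12 {Y : Type} (S : Y * Y -> Y * Y) (t : Y * Y * Y) : Y * Y * Y :=
  let: (y1, y2, y3) := t in let: (p, q) := S (y1, y2) in (p, q, y3).
Definition S23 {Y : Type} (S : Y * Y -> Y * Y) (t : Y * Y * Y) : Y * Y * Y :=
  let: (y1, y2, y3) := t in let: (p, q) := S (y2, y3) in (y1, p, q).
Definition S13 {Y : Type} (S : Y * Y -> Y * Y) (t : Y * Y * Y) : Y * Y * Y :=
  let: (y1, y2, y3) := t in let: (p, q) := S (y1, y3) in (p, y2, q).

Definition pentagon_map {Y : Type} (S : Y * Y -> Y * Y) : Prop :=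
  forall t : Y * Y * Y, S12 S (S13 S (S23 S t)) = S23 S (S12 S t).

(* Writing S(x, y) = (u(x, y), xy), both sides of the pentagon equation at (x, y, z) have
   third component xyz, and the first two components agree exactly when
     u(x, yz) u(y, z) = u(xy, z)   and   u(u(x, yz), u(y, z)) = u(x, y).
   For u(x, y) = x f(y) / f(xy) the first identity is a cancellation, and the hypothesis
   f(u(x, y)) = f(x) / f(xy) turns the second into one as well. *)

From HB Require Import structures.
From mathcomp Require Import all_boot all_order all_algebra.
From mathcomp Require Import ring.
Import GRing.Theory.
Local Open Scope ring_scope.

Set Implicit Arguments.
Unset Strict Implicit.

Section PentagonOfComponents.

Variables (T : Type) (P : pred T) (U V : T -> T -> T).
Variable S : {x | P x} * {x | P x} -> {x | P x} * {x | P x}.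

Hypothesis S_val : forall a b,
  sval (S (a, b)).1 = U (sval a) (sval b) /\ sval (S (a, b)).2 = V (sval a) (sval b).

Hypothesis VA : forall x y z, P x -> P y -> P z -> V x (V y z) = V (V x y) z.
Hypothesis VU : forall x y z, P x -> P y -> P z ->
  V (U x (V y z)) (U y z) = U (V x y) z.
Hypothesis UU : forall x y z, P x -> P y -> P z ->
  U (U x (V y z)) (U y z) = U x y.

Lemma pentagon_map_of_components : pentagon_map S.
Proof.
move=> [[[x Px] [y Py]] [z Pz]]; rewrite /S12 /S13 /S23.
case: (S (_, _)) (S_val (exist _ y Py) (exist _ z Pz)) => a1 b1 /= [ea1 eb1].
case: (S (_, _)) (S_val (exist _ x Px) b1) => a2 b2 /= [ea2 eb2].
case: (S (_, _)) (S_val a2 a1) => a3 b3 /= [ea3 eb3].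
case: (S (_, _)) (S_val (exist _ x Px) (exist _ y Py)) => a4 b4 /= [ea4 eb4].
case: (S (_, _)) (S_val b4 (exist _ z Pz)) => a5 b5 /= [ea5 eb5].
congr (_, _, _); apply: val_inj => /=.
- by rewrite ea3 ea2 eb1 ea1 ea4 UU.
- by rewrite eb3 ea5 ea2 eb1 ea1 eb4 VU.
- by rewrite eb2 eb1 eb5 eb4 VA.
Qed.

End PentagonOfComponents.

Section MultiplicativeSolution.

Variables (K : fieldType) (X : pred K) (f : K -> K).

Hypothesis X_neq0 : forall x, x \in X -> x != 0.
Hypothesis f_in : forall x, x \in X -> f x \in X.
Hypothesis X_closed : forall x y, x \in X -> y \in X ->
  x * (f y / f (x * y)) \in X /\ x * y \in X.
Hypothesis f_pentagon : forall x y, x \in X -> y \in X ->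
  f (x * (f y / f (x * y))) * f (x * y) = f x.

Definition pent_fst (x y : K) : K := x * (f y / f (x * y)).

Lemma f_neq0 x : x \in X -> f x != 0.
Proof. by move=> Xx; apply/X_neq0/f_in. Qed.

Lemma mulr_in x y : x \in X -> y \in X -> x * y \in X.
Proof. by move=> Xx Xy; case: (X_closed Xx Xy). Qed.

Lemma f_pent_fst x y : x \in X -> y \in X -> f (pent_fst x y) = f x / f (x * y).
Proof.
by move=> Xx Xy; rewrite -(f_pentagon Xx Xy) mulfK // f_neq0 // mulr_in.
Qed.

Lemma pent_fst_mul x y z : x \in X -> y \in X -> z \in X ->
  pent_fst x (y * z) * pent_fst y z = pent_fst (x * y) z.
Proof.
move=> Xx Xy Xz; have Xyz := mulr_in Xy Xz.
have nfyz := f_neq0 Xyz; rewrite /pent_fst !mulrA; field.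
by rewrite nfyz f_neq0 // -mulrA mulr_in.
Qed.

Lemma pent_fst_comp x y z : x \in X -> y \in X -> z \in X ->
  pent_fst (pent_fst x (y * z)) (pent_fst y z) = pent_fst x y.
Proof.
move=> Xx Xy Xz; have [Xxy Xyz] := (mulr_in Xx Xy, mulr_in Xy Xz).
rewrite [pent_fst (pent_fst _ _) _]/pent_fst pent_fst_mul //.
rewrite !f_pent_fst // /pent_fst.
have [nfxy nfyz] := (f_neq0 Xxy, f_neq0 Xyz).
have nfxyz : f (x * y * z) != 0 by rewrite f_neq0 // mulr_in.
rewrite [x * (y * z)]mulrA; field; by rewrite nfxy nfyz nfxyz.
Qed.

End MultiplicativeSolution.

Theorem mainTheorem3 (K : fieldType) (X : pred K) (f : K -> K)
  (hX0 : forall x, x \in X -> x != 0)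
  (hfX : forall x, x \in X -> f x \in X)
  (hwd : forall x y, x \in X -> y \in X ->
           x * (f y / f (x * y)) \in X /\ x * y \in X)
  (hf : forall x y, x \in X -> y \in X ->
           f (x * (f y / f (x * y))) * f (x * y) = f x)
  (S : {x : K | x \in X} * {x : K | x \in X} ->
       {x : K | x \in X} * {x : K | x \in X})
  (hS : forall a b : {x : K | x \in X},
          sval (S (a, b)).1 = sval a * (f (sval b) / f (sval a * sval b)) /\
          sval (S (a, b)).2 = sval a * sval b) :
  pentagon_map S.
Proof.
apply: (@pentagon_map_of_components _ (fun x => x \in X) (pent_fst f) *%R S hS).
- by move=> x y z _ _ _; rewrite mulrA.
- exact: pent_fst_mul.
- exact: pent_fst_comp.
Qed.
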